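(* Let $U\in\mathbb R^{\hat D\times\hat D}$, let $D_{t+1},\dots,D_T$ be diagonal $\hat D\times\hat D$ matrices, let $\alpha\ge0$, $\beta>0$, and set $m=\max_k\|U^\top D_{k+1}\|_2$. Suppose $\frac{\alpha}{\beta}m<1$. Then the matrix $M(U)=\prod_{k=t}^{T-1}(\alpha U^\top D_{k+1}+\beta I)$ has condition number $$\kappa_{M(U)}\le\frac{\big(1+\frac{\alpha}{\beta}m\big)^{T-t}}{\big(1-\frac{\alpha}{\beta}m\big)^{T-t}}.$$ In particular, if $\beta=1-\alpha$ and $\alpha=\frac{1}{T m}$ (with $Tm>1$ large enough that $\frac{\alpha}{\beta}m<1$), then $\kappa_{M(U)}=O(1)$ uniformly in $T$.
   Context: The condition number of an invertible matrix $A$ is $\kappa_A=\|A\|_2\,\|A^{-1}\|_2$. This product appears in the FastRNN gradients, where $D_k=\mathrm{diag}(\sigma'(Wx_k+Uh_{k-1}))$. *)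

(* real matrices over Stdlib R, represented as functions
   nat -> nat -> R of which only the n x n block (indices < n) matters. *)
From Stdlib Require Import Reals Lra List Classical ClassicalEpsilon.
Import ListNotations.
Open Scope R_scope.

Definition mat := nat -> nat -> R.
Definition vec := nat -> R.

Definition rsum (n : nat) (f : nat -> R) : R :=
  fold_right Rplus 0 (map f (seq 0 n)).

Definition mmul (n : nat) (A B : mat) : mat :=
  fun i j => rsum n (fun k => A i k * B k j).
Definition madd (A B : mat) : mat := fun i j => A i j + B i j.
Definition mscale (a : R) (A : mat) : mat := fun i j => a * A i j.
Definition mtr (A : mat) : mat := fun i j => A j i.
Definition mid : mat := fun i j => if Nat.eqb i j then 1 else 0.

Definition is_diag (n : nat) (A : mat) : Prop :=
  forall i j, (i < n)%nat -> (j < n)%nat -> i <> j -> A i j = 0.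

Definition mvec (n : nat) (A : mat) (x : vec) : vec :=
  fun i => rsum n (fun j => A i j * x j).
Definition vnorm (n : nat) (x : vec) : R := sqrt (rsum n (fun i => x i ^ 2)).

(* spectral norm ||A||_2 = sup { ||Ax|| : ||x|| <= 1 } (the least upper bound,
   which always exists; chosen by classical epsilon) *)
Definition opnorm_set (n : nat) (A : mat) : R -> Prop :=
  fun r => exists x : vec, vnorm n x <= 1 /\ r = vnorm n (mvec n A x).
Definition opnorm (n : nat) (A : mat) : R :=
  epsilon (inhabits 0) (fun c => is_lub (opnorm_set n A) c).

Definition is_inverse (n : nat) (A B : mat) : Prop :=
  forall i j, (i < n)%nat -> (j < n)%nat ->
    mmul n A B i j = mid i j /\ mmul n B A i j = mid i j.
Definition invertible (n : nat) (A : mat) : Prop := exists B, is_inverse n A B.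
Definition minv (n : nat) (A : mat) : mat :=
  epsilon (inhabits mid) (fun B => is_inverse n A B).

Definition cond (n : nat) (A : mat) : R := opnorm n A * opnorm n (minv n A).

(* ordered product F t * F (t+1) * ... * F (T-1)  (identity if T <= t) *)
Definition mprod (n : nat) (F : nat -> mat) (t T : nat) : mat :=
  fold_right (fun k acc => mmul n (F k) acc) mid (seq t (T - t)).

Definition factor (n : nat) (alpha beta : R) (U : mat) (D : nat -> mat) (k : nat) : mat :=
  madd (mscale alpha (mmul n (mtr U) (D (S k)))) (mscale beta mid).

Definition Mmat (n : nat) (alpha beta : R) (U : mat) (D : nat -> mat) (t T : nat) : mat :=
  mprod n (factor n alpha beta U D) t T.

(* m = max_{t <= k <= T-1} ||U^T D_{k+1}||_2  (0 for an empty range;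
   norms are nonnegative so this is the max otherwise) *)
Definition mmax (n : nat) (U : mat) (D : nat -> mat) (t T : nat) : R :=
  fold_right Rmax 0 (map (fun k => opnorm n (mmul n (mtr U) (D (S k)))) (seq t (T - t))).

(* Each factor [alpha A + beta I] with [||A|| <= m] stretches every vector by a
   factor between [beta - alpha m] and [beta + alpha m], by the triangle
   inequality.  Hence the product of [N = T - t] factors satisfies
   [(beta - alpha m)^N |x| <= |M x| <= (beta + alpha m)^N |x|]: it is injective,
   hence invertible, with [||M|| <= (beta + alpha m)^N] and
   [||M^-1|| <= (beta - alpha m)^-N], and dividing by [beta^N] gives the bound.  For [beta = 1 - alpha],
   [alpha = 1 / (T m)] the ratio [r = alpha m / beta = m / (T m - 1)] satisfies
   [(1 + r) / (1 - r) <= 1 + 4 r <= exp (4 r)] once [r <= 1/2], and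
   [r T = T m / (T m - 1) <= 2], so the bound is at most [exp 8]. *)

From Stdlib Require Import Reals List Lra Lia ClassicalEpsilon.
From mathcomp Require all_boot all_algebra Rstruct.
Open Scope R_scope.

Lemma rsum_S n f : rsum (S n) f = rsum n f + f n.
Proof.
  unfold rsum. rewrite seq_S, map_app, fold_right_app. simpl.
  induction (map f (seq 0 n)); simpl; lra.
Qed.

Lemma rsum_ext n f g : (forall i, (i < n)%nat -> f i = g i) -> rsum n f = rsum n g.
Proof.
  induction n; intros H; [reflexivity|].
  rewrite !rsum_S, IHn, H; auto.
Qed.

Lemma rsum_const0 n : rsum n (fun _ => 0) = 0.
Proof. induction n; [reflexivity|]. rewrite rsum_S, IHn. lra. Qed.

Lemma rsum_plus n f g : rsum n (fun i => f i + g i) = rsum n f + rsum n g.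
Proof. induction n; [unfold rsum; simpl; lra|]. rewrite !rsum_S, IHn. lra. Qed.

Lemma rsum_scal n c f : rsum n (fun i => c * f i) = c * rsum n f.
Proof. induction n; [unfold rsum; simpl; lra|]. rewrite !rsum_S, IHn. lra. Qed.

Lemma rsum_le n f g : (forall i, (i < n)%nat -> f i <= g i) -> rsum n f <= rsum n g.
Proof.
  induction n; intros H; [unfold rsum; simpl; lra|].
  rewrite !rsum_S. apply Rplus_le_compat; [apply IHn; intros|]; apply H; lia.
Qed.

Lemma rsum_nonneg n f : (forall i, (i < n)%nat -> 0 <= f i) -> 0 <= rsum n f.
Proof. intros H. rewrite <- (rsum_const0 n). apply rsum_le, H. Qed.

Lemma rsum_term_le n f j :
  (forall i, (i < n)%nat -> 0 <= f i) -> (j < n)%nat -> f j <= rsum n f.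
Proof.
  induction n; intros H Hj; [lia|]. rewrite rsum_S.
  assert (Hn : 0 <= f n) by (apply H; lia).
  destruct (Nat.eq_dec j n) as [->|Hne].
  - pose proof (rsum_nonneg n f ltac:(intros; apply H; lia)). lra.
  - pose proof (IHn ltac:(intros; apply H; lia) ltac:(lia)). lra.
Qed.

Lemma rsum_swap n m (f : nat -> nat -> R) :
  rsum n (fun i => rsum m (fun j => f i j)) = rsum m (fun j => rsum n (fun i => f i j)).
Proof.
  induction n.
  - symmetry. apply rsum_const0.
  - rewrite rsum_S, IHn, <- rsum_plus. apply rsum_ext. intros. rewrite rsum_S. reflexivity.
Qed.

Lemma rsum_mid n i x : (i < n)%nat -> rsum n (fun j => mid i j * x j) = x i.
Proof.
  induction n; intros Hi; [lia|]. rewrite rsum_S. unfold mid at 2.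
  destruct (Nat.eqb_spec i n) as [->|Hne].
  - rewrite (rsum_ext n _ (fun _ => 0)), rsum_const0; [lra|].
    intros k Hk. unfold mid. destruct (Nat.eqb_spec n k); [lia|lra].
  - rewrite IHn by lia. lra.
Qed.

Lemma rsum_abs n f : Rabs (rsum n f) <= rsum n (fun i => Rabs (f i)).
Proof.
  induction n; [unfold rsum; simpl; rewrite Rabs_R0; lra|].
  rewrite !rsum_S. eapply Rle_trans; [apply Rabs_triang|]. lra.
Qed.

Lemma cauchy_schwarz n u v :
  (rsum n (fun i => u i * v i)) ^ 2
  <= rsum n (fun i => u i ^ 2) * rsum n (fun i => v i ^ 2).
Proof.
  set (a := rsum n (fun i => u i ^ 2)).
  set (b := rsum n (fun i => u i * v i)).
  set (c := rsum n (fun i => v i ^ 2)).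
  assert (Hquad : forall l, 0 <= a + 2 * l * b + l ^ 2 * c).
  { intros l.
    replace (a + 2 * l * b + l ^ 2 * c) with (rsum n (fun i => (u i + l * v i) ^ 2)).
    - apply rsum_nonneg. intros; apply pow2_ge_0.
    - unfold a, b, c. rewrite <- !rsum_scal, <- !rsum_plus.
      apply rsum_ext. intros; ring. }
  assert (Hc : 0 <= c) by (apply rsum_nonneg; intros; apply pow2_ge_0).
  destruct (Rle_lt_or_eq_dec 0 c Hc) as [Hcpos|Hc0].
  - (* minimise the quadratic at [l = - b / c] *)
    specialize (Hquad (- b / c)).
    replace (a + 2 * (- b / c) * b + (- b / c) ^ 2 * c) with ((a * c - b ^ 2) / c)
      in Hquad by (field; lra).
    apply Rmult_le_compat_r with (r := c) in Hquad; [|lra].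
    replace ((a * c - b ^ 2) / c * c) with (a * c - b ^ 2) in Hquad by (field; lra).
    lra.
  - rewrite <- Hc0. destruct (Req_dec b 0) as [Hb|Hb]; [rewrite Hb; lra|].
    exfalso. specialize (Hquad (- (a + 1) / (2 * b))). rewrite <- Hc0 in Hquad.
    replace (a + 2 * (- (a + 1) / (2 * b)) * b + (- (a + 1) / (2 * b)) ^ 2 * 0)
      with (-1) in Hquad by (field; auto).
    lra.
Qed.

Lemma vnorm_nonneg n x : 0 <= vnorm n x.
Proof. apply sqrt_pos. Qed.

Lemma vnorm_ext n x y : (forall i, (i < n)%nat -> x i = y i) -> vnorm n x = vnorm n y.
Proof. intros H. unfold vnorm. f_equal. apply rsum_ext. intros; rewrite H; auto. Qed.

Lemma vnorm_sq n x : vnorm n x ^ 2 = rsum n (fun i => x i ^ 2).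
Proof. unfold vnorm. rewrite pow2_sqrt; auto. apply rsum_nonneg; intros; apply pow2_ge_0. Qed.

Lemma vnorm_scal n c x : vnorm n (fun i => c * x i) = Rabs c * vnorm n x.
Proof.
  unfold vnorm. rewrite (rsum_ext n _ (fun i => c ^ 2 * x i ^ 2)) by (intros; ring).
  rewrite rsum_scal, sqrt_mult_alt by apply pow2_ge_0.
  rewrite <- sqrt_Rsqr_abs. unfold Rsqr. repeat f_equal. ring.
Qed.

Lemma vnorm_zero_fun n : vnorm n (fun _ => 0) = 0.
Proof.
  rewrite (vnorm_ext n _ (fun _ => 0 * 1)) by (intros; ring).
  rewrite vnorm_scal, Rabs_R0. ring.
Qed.

Lemma Rabs_le_vnorm n x j : (j < n)%nat -> Rabs (x j) <= vnorm n x.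
Proof.
  intros Hj. rewrite <- sqrt_Rsqr_abs. unfold vnorm. apply sqrt_le_1_alt.
  unfold Rsqr. replace (x j * x j) with (x j ^ 2) by ring.
  apply (rsum_term_le n (fun i => x i ^ 2)); auto. intros; apply pow2_ge_0.
Qed.

Lemma vnorm_eq0 n x : vnorm n x = 0 -> forall j, (j < n)%nat -> x j = 0.
Proof.
  intros H j Hj. pose proof (Rabs_le_vnorm n x j Hj) as Hle. rewrite H in Hle.
  destruct (Req_dec (x j) 0) as [E|E]; [exact E|].
  pose proof (Rabs_pos_lt (x j) E). lra.
Qed.

Lemma vnorm_triangle n x y : vnorm n (fun i => x i + y i) <= vnorm n x + vnorm n y.
Proof.
  pose proof (vnorm_nonneg n x). pose proof (vnorm_nonneg n y).
  pose proof (vnorm_nonneg n (fun i => x i + y i)).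
  set (p := rsum n (fun i => x i * y i)).
  assert (Hp : p <= vnorm n x * vnorm n y).
  { pose proof (cauchy_schwarz n x y) as Hcs. rewrite <- !vnorm_sq in Hcs.
    fold p in Hcs. apply Rsqr_incr_0_var; unfold Rsqr; nra. }
  apply Rsqr_incr_0_var; [|lra]. unfold Rsqr.
  replace (vnorm n (fun i => x i + y i) * vnorm n (fun i => x i + y i))
    with (vnorm n (fun i => x i + y i) ^ 2) by ring.
  rewrite vnorm_sq, (rsum_ext n _ (fun i => x i ^ 2 + (2 * (x i * y i) + y i ^ 2)))
    by (intros; ring).
  rewrite !rsum_plus, rsum_scal, <- !vnorm_sq. fold p. nra.
Qed.

Lemma mvec_mmul n A B x i : mvec n (mmul n A B) x i = mvec n A (mvec n B x) i.
Proof.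
  unfold mvec, mmul.
  rewrite (rsum_ext n _ (fun j => rsum n (fun k => A i k * B k j * x j))).
  - rewrite rsum_swap. apply rsum_ext. intros k _.
    rewrite <- rsum_scal. apply rsum_ext. intros; ring.
  - intros. rewrite Rmult_comm, <- rsum_scal. apply rsum_ext. intros; ring.
Qed.

Lemma mvec_mid n x i : (i < n)%nat -> mvec n mid x i = x i.
Proof. intros; apply rsum_mid; auto. Qed.

Lemma mvec_scal n A c x i : mvec n A (fun j => c * x j) i = c * mvec n A x i.
Proof. unfold mvec. rewrite <- rsum_scal. apply rsum_ext. intros; ring. Qed.

Lemma mvec_inverse n A B y i :
  is_inverse n A B -> (i < n)%nat -> mvec n A (mvec n B y) i = y i.
Proof.
  intros HAB Hi. rewrite <- mvec_mmul. unfold mvec.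
  rewrite <- (rsum_mid n i y Hi). apply rsum_ext. intros j Hj.
  now rewrite (proj1 (HAB i j Hi Hj)).
Qed.

(* Transferred from MathComp by copying the [n x n] block into ['M[R]_n]: a
   matrix with trivial kernel has nonzero determinant. *)
Module Invertibility.
Import all_boot all_algebra Rstruct.
Import GRing.Theory.
Local Open Scope ring_scope.

Lemma rsum_big k (f : nat -> R) : rsum k f = \sum_(i < k) f i.
Proof.
elim: k => [|k IH]; first by rewrite big_ord0.
by rewrite rsum_S big_ord_recr /= IH.
Qed.

Lemma invertible_of_injective (n : nat) (M : mat) :
  (forall x : vec, (forall i, (i < n)%coq_nat -> mvec n M x i = 0%R) ->
      forall j, (j < n)%coq_nat -> x j = 0%R) -> invertible n M.
Proof.
case: n M => [|n] M inj_M.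
  by exists mid => i j Hi; exfalso; lia.
pose A : 'M[R]_n.+1 := \matrix_(i, j) M i j.
have uA : A \in unitmx.
  rewrite unitmxE unitfE -det_tr; apply/negP => /det0P [v v0 vA].
  move/negP: v0; apply; apply/eqP/rowP => j.
  pose x : vec := fun j => v 0 (inord j).
  have Mx0 : forall i, (i < n.+1)%coq_nat -> mvec n.+1 M x i = 0%R.
    move=> i /ltP Hi.
    move/matrixP: vA => /(_ 0 (inord i)); rewrite !mxE => <-.
    rewrite /mvec rsum_big; apply: eq_bigr => k _.
    by rewrite !mxE inordK // /x inord_val mulrC.
  have := inj_M x Mx0 j (ltP (ltn_ord j)).
  by rewrite /x inord_val mxE.
exists (fun i j => invmx A (inord i) (inord j)) => i j /ltP Hi /ltP Hj.
have mid_mx : mid i j = (1%:M : 'M[R]_n.+1) (inord i) (inord j).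
  rewrite /mid mxE; case: (PeanoNat.Nat.eqb_spec i j) => [->|Hne].
    by rewrite eqxx.
  case: eqP => // /(congr1 val); rewrite /= !inordK // => E; by case: Hne.
rewrite mid_mx; split.
  rewrite -(mulmxV uA) /mmul rsum_big mxE; apply: eq_bigr => k _.
  by rewrite mxE inordK // inord_val.
rewrite -(mulVmx uA) /mmul rsum_big mxE; apply: eq_bigr => k _.
by rewrite mxE inordK // inord_val.
Qed.
End Invertibility.

Lemma opnorm_set_bound n A : bound (opnorm_set n A).
Proof.
  exists (sqrt (rsum n (fun i => (rsum n (fun j => Rabs (A i j))) ^ 2))).
  intros r [x [Hx ->]]. unfold vnorm. apply sqrt_le_1_alt. apply rsum_le. intros i Hi.
  assert (Hrow : Rabs (mvec n A x i) <= rsum n (fun j => Rabs (A i j))).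
  { eapply Rle_trans; [apply rsum_abs|]. apply rsum_le. intros j Hj.
    rewrite Rabs_mult. pose proof (Rabs_le_vnorm n x j Hj).
    pose proof (Rabs_pos (A i j)). pose proof (Rabs_pos (x j)). nra. }
  rewrite <- (pow2_abs (mvec n A x i)). apply pow_incr. split; [apply Rabs_pos|exact Hrow].
Qed.

Lemma opnorm_is_lub n A : is_lub (opnorm_set n A) (opnorm n A).
Proof.
  unfold opnorm. apply epsilon_spec.
  destruct (completeness (opnorm_set n A) (opnorm_set_bound n A)) as [c Hc];
    [|exists c; exact Hc].
  exists (vnorm n (mvec n A (fun _ => 0))), (fun _ => 0).
  split; [rewrite vnorm_zero_fun; lra|reflexivity].
Qed.

Lemma opnorm_nonneg n A : 0 <= opnorm n A.
Proof.
  eapply Rle_trans; [apply (vnorm_nonneg n (mvec n A (fun _ => 0)))|].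
  apply (proj1 (opnorm_is_lub n A)). exists (fun _ => 0).
  split; [rewrite vnorm_zero_fun; lra|reflexivity].
Qed.

Lemma opnorm_bound n A x : vnorm n (mvec n A x) <= opnorm n A * vnorm n x.
Proof.
  destruct (Rle_lt_or_eq_dec 0 (vnorm n x) (vnorm_nonneg n x)) as [Hx|Hx].
  - (* apply the supremum to the unit vector [x / |x|] *)
    assert (Hunit : vnorm n (mvec n A (fun j => / vnorm n x * x j)) <= opnorm n A).
    { apply (proj1 (opnorm_is_lub n A)). eexists. split; [|reflexivity].
      rewrite vnorm_scal, Rabs_right by (left; apply Rinv_0_lt_compat; lra).
      right. field. lra. }
    rewrite (vnorm_ext n _ (fun i => / vnorm n x * mvec n A x i)) in Hunit
      by (intros; apply mvec_scal).
    rewrite vnorm_scal, Rabs_right in Hunit by (left; apply Rinv_0_lt_compat; lra).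
    apply Rmult_le_compat_l with (r := vnorm n x) in Hunit; [|lra].
    rewrite <- Rmult_assoc, Rinv_r in Hunit by lra. lra.
  - rewrite <- Hx, (vnorm_ext n _ (fun _ => 0)), vnorm_zero_fun; [lra|].
    intros i Hi. unfold mvec. rewrite <- (rsum_const0 n). apply rsum_ext.
    intros j Hj. rewrite (vnorm_eq0 n x (eq_sym Hx) j Hj). ring.
Qed.

Lemma opnorm_le n A c :
  0 <= c -> (forall x, vnorm n (mvec n A x) <= c * vnorm n x) -> opnorm n A <= c.
Proof.
  intros Hc HA. apply (proj2 (opnorm_is_lub n A)).
  intros r [x [Hx ->]]. eapply Rle_trans; [apply HA|].
  pose proof (vnorm_nonneg n x). nra.
Qed.

Lemma invertible_cond_le n A a b :
  0 <= a -> 0 < b ->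
  (forall x, b * vnorm n x <= vnorm n (mvec n A x) <= a * vnorm n x) ->
  invertible n A /\ cond n A <= a / b.
Proof.
  intros Ha Hb HA.
  assert (HAinv : invertible n A).
  { apply Invertibility.invertible_of_injective. intros x Ax0.
    apply vnorm_eq0. apply Rle_antisym; [|apply vnorm_nonneg].
    destruct (HA x) as [Hlo _].
    rewrite (vnorm_ext n (mvec n A x) (fun _ => 0)), vnorm_zero_fun in Hlo
      by exact Ax0.
    pose proof (vnorm_nonneg n x). nra. }
  split; [exact HAinv|].
  assert (Hinv : is_inverse n A (minv n A))
    by (unfold minv; apply epsilon_spec; exact HAinv).
  assert (Hnorm_inv : opnorm n (minv n A) <= / b).
  { apply opnorm_le; [left; apply Rinv_0_lt_compat; lra|]. intros y.
    destruct (HA (mvec n (minv n A) y)) as [Hlo _].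
    rewrite (vnorm_ext n (mvec n A _) y) in Hlo by (intros; apply mvec_inverse; auto).
    apply Rmult_le_reg_l with (r := b); [lra|].
    rewrite <- Rmult_assoc, Rinv_r by lra. lra. }
  unfold cond, Rdiv. apply Rmult_le_compat;
    [apply opnorm_nonneg|apply opnorm_nonneg|apply opnorm_le; [lra|apply HA]|exact Hnorm_inv].
Qed.

Lemma vnorm_shift_bounds n A alpha beta m x :
  0 <= alpha -> 0 < beta -> opnorm n A <= m ->
  (beta - alpha * m) * vnorm n x
    <= vnorm n (mvec n (madd (mscale alpha A) (mscale beta mid)) x)
    <= (beta + alpha * m) * vnorm n x.
Proof.
  intros Ha Hb Hm. set (B := madd (mscale alpha A) (mscale beta mid)).
  assert (HBx : forall i, (i < n)%nat -> mvec n B x i = alpha * mvec n A x i + beta * x i).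
  { intros i Hi. unfold B, mvec, madd, mscale.
    rewrite (rsum_ext n _ (fun j => alpha * (A i j * x j) + beta * (mid i j * x j)))
      by (intros; ring).
    rewrite rsum_plus, !rsum_scal, rsum_mid; auto. }
  assert (HAx : vnorm n (mvec n A x) <= m * vnorm n x).
  { eapply Rle_trans; [apply opnorm_bound|].
    apply Rmult_le_compat_r; [apply vnorm_nonneg|exact Hm]. }
  assert (HaAx : vnorm n (fun i => alpha * mvec n A x i) <= alpha * m * vnorm n x).
  { rewrite vnorm_scal, Rabs_right by lra. rewrite Rmult_assoc.
    apply Rmult_le_compat_l; lra. }
  split.
  - (* [beta x = B x - alpha A x] *)
    assert (Hbx : vnorm n (fun i => beta * x i)
                  = vnorm n (fun i => mvec n B x i + - alpha * mvec n A x i)).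
    { apply vnorm_ext. intros i Hi. rewrite HBx by exact Hi. ring. }
    rewrite vnorm_scal, Rabs_right in Hbx by lra.
    pose proof (vnorm_triangle n (mvec n B x) (fun i => - alpha * mvec n A x i)) as Htri.
    cbv beta in Htri. rewrite <- Hbx, vnorm_scal, Rabs_left1 in Htri by lra.
    nra.
  - rewrite (vnorm_ext n _ (fun i => alpha * mvec n A x i + beta * x i)) by exact HBx.
    eapply Rle_trans; [apply vnorm_triangle|].
    rewrite (vnorm_scal n beta), Rabs_right by lra. lra.
Qed.

Lemma vnorm_prod_bounds n (F : nat -> mat) (l : list nat) a b :
  0 <= a -> 0 <= b ->
  (forall k, In k l -> forall y,
     b * vnorm n y <= vnorm n (mvec n (F k) y) <= a * vnorm n y) ->
  forall x,
    b ^ length l * vnorm n x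
      <= vnorm n (mvec n (fold_right (fun k P => mmul n (F k) P) mid l) x)
      <= a ^ length l * vnorm n x.
Proof.
  intros Ha Hb. induction l as [|k l IH]; intros HF x; simpl.
  - rewrite (vnorm_ext n (mvec n mid x) x) by (intros; apply mvec_mid; auto). lra.
  - set (P := fold_right (fun k P => mmul n (F k) P) mid l) in *.
    rewrite (vnorm_ext n (mvec n (mmul n (F k) P) x) (mvec n (F k) (mvec n P x)))
      by (intros; apply mvec_mmul).
    destruct (IH (fun k' Hk' => HF k' (or_intror Hk')) x) as [HPlo HPhi].
    destruct (HF k (or_introl eq_refl) (mvec n P x)) as [HFlo HFhi].
    pose proof (pow_le b (length l) Hb). pose proof (pow_le a (length l) Ha).
    pose proof (vnorm_nonneg n x).
    split; nra.
Qed.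

Lemma fold_Rmax_nonneg (l : list R) : 0 <= fold_right Rmax 0 l.
Proof. induction l; simpl; [lra|]. eapply Rle_trans; [apply IHl|]. apply Rmax_r. Qed.

Lemma fold_Rmax_ge (l : list R) a : In a l -> a <= fold_right Rmax 0 l.
Proof.
  induction l; simpl; [tauto|]. intros [->|Hin].
  - apply Rmax_l.
  - eapply Rle_trans; [apply IHl; auto|]. apply Rmax_r.
Qed.

Lemma Mmat_invertible_cond_le n t T U D alpha beta :
  0 <= alpha -> 0 < beta -> alpha / beta * mmax n U D t T < 1 ->
  invertible n (Mmat n alpha beta U D t T) /\
  cond n (Mmat n alpha beta U D t T)
    <= (1 + alpha / beta * mmax n U D t T) ^ (T - t)
       / (1 - alpha / beta * mmax n U D t T) ^ (T - t).
Proof.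
  intros Ha Hb Hr. set (m := mmax n U D t T) in *.
  assert (Hm : 0 <= m) by apply fold_Rmax_nonneg.
  assert (Ham : alpha * m < beta).
  { replace (alpha * m) with (alpha / beta * m * beta) by (field; lra).
    pose proof (Rmult_lt_compat_r beta _ _ Hb Hr). lra. }
  assert (Hfactor : forall k, In k (seq t (T - t)) -> forall y,
    (beta - alpha * m) * vnorm n y <= vnorm n (mvec n (factor n alpha beta U D k) y)
    <= (beta + alpha * m) * vnorm n y).
  { intros k Hk y. apply vnorm_shift_bounds; auto.
    apply fold_Rmax_ge, in_map_iff. exists k; auto. }
  pose proof (vnorm_prod_bounds n _ _ (beta + alpha * m) (beta - alpha * m)
                ltac:(nra) ltac:(lra) Hfactor) as Hprod.
  rewrite length_seq in Hprod.
  destruct (invertible_cond_le n (Mmat n alpha beta U D t T) _ _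
              (pow_le (beta + alpha * m) (T - t) ltac:(nra))
              (pow_lt (beta - alpha * m) (T - t) ltac:(lra)) Hprod)
    as [Hinv Hcond].
  split; [exact Hinv|]. eapply Rle_trans; [exact Hcond|]. right.
  replace (beta + alpha * m) with (beta * (1 + alpha / beta * m)) by (field; lra).
  replace (beta - alpha * m) with (beta * (1 - alpha / beta * m)) by (field; lra).
  rewrite !Rpow_mult_distr. field.
  split; apply pow_nonzero; lra.
Qed.

Lemma exp_pow x k : exp x ^ k = exp (INR k * x).
Proof.
  induction k; [simpl; rewrite Rmult_0_l, exp_0; reflexivity|].
  rewrite <- tech_pow_Rmult, IHk, <- exp_plus, S_INR. f_equal. ring.
Qed.

Lemma ratio_pow_le_exp r N :
  0 <= r <= 1 / 2 -> (1 + r) ^ N / (1 - r) ^ N <= exp (4 * r * INR N).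
Proof.
  intros Hr.
  assert (Hq : (1 + r) / (1 - r) <= exp (4 * r)).
  { eapply Rle_trans; [|apply exp_ineq1_le].
    apply Rmult_le_reg_r with (r := 1 - r); [lra|].
    unfold Rdiv. rewrite Rmult_assoc, Rinv_l by lra. nra. }
  assert (Hq0 : 0 <= (1 + r) / (1 - r))
    by (apply Rmult_le_pos; [|left; apply Rinv_0_lt_compat]; lra).
  unfold Rdiv. rewrite <- pow_inv, <- Rpow_mult_distr.
  eapply Rle_trans; [apply pow_incr; split; [exact Hq0|exact Hq]|].
  rewrite exp_pow. right. f_equal. ring.
Qed.

Lemma step_size_bounds m X :
  0 < m -> 2 + 2 / m <= X ->
  let alpha := 1 / (X * m) in
  0 < alpha < 1 /\ 0 <= alpha / (1 - alpha) * m <= 1 / 2 /\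
  alpha / (1 - alpha) * m * X <= 2.
Proof.
  intros Hm HX alpha.
  assert (HXm : 2 * m + 2 <= X * m).
  { replace (2 * m + 2) with ((2 + 2 / m) * m) by (field; lra).
    apply Rmult_le_compat_r; lra. }
  assert (Halpha : 0 < alpha < 1).
  { unfold alpha. split; [apply Rdiv_lt_0_compat; nra|].
    apply Rmult_lt_reg_r with (r := X * m); [nra|].
    unfold Rdiv. rewrite Rmult_1_l, Rinv_l by nra. nra. }
  replace (alpha / (1 - alpha) * m) with (m / (X * m - 1)) by (unfold alpha; field; nra).
  split; [exact Halpha|].
  unfold Rdiv. split; [split|].
  - apply Rmult_le_pos; [lra|]. left. apply Rinv_0_lt_compat. nra.
  - apply Rmult_le_reg_r with (r := X * m - 1); [nra|].
    rewrite Rmult_assoc, Rinv_l by nra. nra.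
  - rewrite Rmult_assoc, (Rmult_comm (/ _)), <- Rmult_assoc.
    apply Rmult_le_reg_r with (r := X * m - 1); [nra|].
    rewrite Rmult_assoc, Rinv_l by nra. nra.
Qed.

Theorem mainTheorem7 :
  (forall (n t T : nat) (U : mat) (D : nat -> mat) (alpha beta : R),
      (forall k, (t < k <= T)%nat -> is_diag n (D k)) ->
      0 <= alpha -> 0 < beta ->
      alpha / beta * mmax n U D t T < 1 ->
      invertible n (Mmat n alpha beta U D t T) /\
      cond n (Mmat n alpha beta U D t T)
        <= (1 + alpha / beta * mmax n U D t T) ^ (T - t)
           / (1 - alpha / beta * mmax n U D t T) ^ (T - t))
  /\
  (forall m : R, 0 < m ->
     exists C T0 : R, forall (n t T : nat) (U : mat) (D : nat -> mat),
       (forall k, (t < k <= T)%nat -> is_diag n (D k)) ->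
       mmax n U D t T = m ->
       T0 <= INR T ->
       1 < INR T * m ->
       let alpha := 1 / (INR T * m) in
       let beta := 1 - alpha in
       alpha / beta * m < 1 ->
       invertible n (Mmat n alpha beta U D t T) /\
       cond n (Mmat n alpha beta U D t T) <= C).
Proof.
  split.
  - intros n t T U D alpha beta _. apply Mmat_invertible_cond_le.
  - intros m Hm. exists (exp 8), (2 + 2 / m).
    intros n t T U D _ Hmax HT _ alpha beta Hr.
    destruct (step_size_bounds m (INR T) Hm HT) as [Halpha [Hr12 HrT]].
    fold alpha in Halpha, Hr12, HrT. fold beta in Hr12, HrT.
    destruct (Mmat_invertible_cond_le n t T U D alpha beta)
      as [Hinv Hcond]; [lra|unfold beta; lra|rewrite Hmax; exact Hr|].
    split; [exact Hinv|]. rewrite Hmax in Hcond.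
    eapply Rle_trans; [exact Hcond|].
    eapply Rle_trans; [apply ratio_pow_le_exp, Hr12|].
    assert (Hexp : 4 * (alpha / beta * m) * INR (T - t) <= 8).
    { pose proof (Rmult_le_compat_l _ _ _ (proj1 Hr12) (le_INR _ _ (Nat.le_sub_l T t))).
      lra. }
    destruct (Rle_lt_or_eq_dec _ _ Hexp) as [Hlt|Heq].
    + left. apply exp_increasing, Hlt.
    + right. rewrite Heq. reflexivity.
Qed.
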